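(* For every integer $n \geq 2$, $$P_{11}(n) := \prod_{j=5}^{n} p_j > \left(n \log(n)\right)^n e^{-2n-2},$$ where $p_j$ denotes the $j$-th prime ($p_1 = 2, p_2 = 3, \dots$, so $p_5 = 11$), and the empty product (for $n < 5$) equals $1$. *)

From mathcomp Require Import all_boot.
From Stdlib Require Import Reals.

(* Smallest prime strictly greater than p: searched in p+1 .. p+p!
   (which always contains a prime, since any prime factor of p!+1 exceeds p). *)
Definition next_prime (p : nat) : nat :=
  p.+1 + find prime (iota p.+1 (p`!)).

(* nth_prime j = p_j, 1-indexed: p_1 = 2, p_2 = 3, p_3 = 5, ... *)
Fixpoint nth_prime (j : nat) : nat :=
  match j with
  | 0 => 1            (* unused junk value; p_1 = next_prime 1 = 2 *)
  | S k => next_prime (nth_prime k)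
  end.

Definition P11 (n : nat) : R :=
  \big[Rmult/1%R]_(5 <= j < n.+1) INR (nth_prime j).

(* Write theta n = ln (p_1 ... p_n).  Erdős's bound prod_(p <= x) p <= 4^x, which follows
   from prod_(m+1 < p <= 2m+1) p | C(2m+1, m) <= 4^m, gives theta n <= p_n ln 4.  Hence
   theta n <= theta (n+1) <= p_(n+1) ln 4, i.e. ln p_(n+1) >= ln (theta n) - ln (ln 4), and
   by induction every positive F with F (x+1) <= F x + ln (F x) - ln (ln 4) and
   F 12 <= theta 12 stays below theta n for n >= 12.  F x = x (ln x + ln (ln x)) - 2x + 11
   is such a function (the inequality is checked on five intervals of x), and
   theta n = ln 210 + ln P11(n) turns this into the claim for n >= 12; for n <= 11 the
   bound p_j >= 11 (j >= 5) suffices.  Logarithms are estimated with the truncated series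
   ln r = 2 artanh ((r - 1) / (r + 1)). *)

From Stdlib Require Import Reals Lra.
From Coquelicot Require Import Coquelicot.
From mathcomp Require Import all_boot zify.

Open Scope nat_scope.

(** * The primorial bound *)

Definition primorial (n : nat) : nat := \prod_(0 <= p < n.+1 | prime p) p.

Lemma primorial_split m n : m <= n ->
  primorial n = primorial m * \prod_(m.+1 <= p < n.+1 | prime p) p.
Proof. by move=> le_mn; rewrite /primorial -big_cat_nat. Qed.

Lemma prime_dvd_fact_leq p n : prime p -> p %| n`! -> p <= n.
Proof.
move=> pr_p; elim: n => [|n IH]; first by rewrite Euclid_dvd1.
by rewrite factS Euclid_dvdM // => /orP[/dvdn_leq -> // | /IH /leqW].
Qed.

Lemma dvdn_prod_cond (I : Type) (r : seq I) (P : pred I) (F : I -> nat) :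
  \prod_(i <- r | P i) F i %| \prod_(i <- r) F i.
Proof.
rewrite big_mkcond; elim/big_ind2: _ => // [a b c d|i _]; first exact: dvdn_mul.
by case: (P i).
Qed.

Lemma coprime_prod_primes_fact a b k : k < a ->
  coprime (\prod_(a <= p < b | prime p) p) k`!.
Proof.
move=> lt_ka; rewrite big_nat_cond.
elim/big_ind: _ => [|x y|p /andP[/andP[le_ap _] pr_p]]; first exact: coprime1n.
  by rewrite coprimeMl => -> ->.
rewrite prime_coprime //; apply/negP => /(prime_dvd_fact_leq _ _ pr_p); lia.
Qed.

Lemma prod_primes_dvd_bin m :
  \prod_(m.+2 <= p < m.*2.+2 | prime p) p %| 'C(m.*2.+1, m).
Proof.
have cop : coprime (\prod_(m.+2 <= p < m.*2.+2 | prime p) p) (m`! * m.+1`!).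
  by rewrite coprimeMr !coprime_prod_primes_fact.
rewrite -(Gauss_dvdl _ cop).
have -> : 'C(m.*2.+1, m) * (m`! * m.+1`!) = (m.*2.+1)`!.
  have e : m.*2.+1 - m = m.+1 by lia.
  by rewrite -e bin_fact //; lia.
rewrite fact_prod [X in _ %| X](big_cat_nat _ (n := m.+2)) //=; last lia.
by apply: dvdn_mull; apply: dvdn_prod_cond.
Qed.

Lemma sum_bin n : \sum_(0 <= i < n.+1) 'C(n, i) = 2 ^ n.
Proof.
by rewrite big_mkord -[2]/(1 + 1) expnDn; apply: eq_bigr => i _; rewrite !exp1n !muln1.
Qed.

Lemma bin_mid_leq m : 'C(m.*2.+1, m) <= 4 ^ m.
Proof.
have sym : 'C(m.*2.+1, m.+1) = 'C(m.*2.+1, m).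
  by rewrite -bin_sub; [congr 'C(_, _) | ]; lia.
have : 'C(m.*2.+1, m) + 'C(m.*2.+1, m.+1) <= 2 ^ m.*2.+1.
  rewrite -sum_bin (big_cat_nat _ (n := m)) //=; last lia.
  rewrite (big_cat_nat _ (m := m) (n := m.+2)) //=; try lia.
  by rewrite [\sum_(m <= i < m.+2) _]big_ltn // big_nat1; lia.
by rewrite sym addnn -mul2n expnS leq_pmul2l // -mul2n expnM; exact.
Qed.

Lemma primorial_leq n : primorial n <= 4 ^ n.
Proof.
elim/ltn_ind: n => n IH.
have [le_n2|lt_2n] := leqP n 2.
  by case: n le_n2 {IH} => [|[|[|]]] //; rewrite /primorial unlock.
rewrite -(odd_double_half n); set m := n./2.
have m_gt0 : 0 < m by rewrite /m; lia.
case: (boolP (odd n)) => odd_n /=.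
- rewrite (primorial_split m.+1 m.*2.+1); last lia.
  rewrite (_ : 4 ^ m.*2.+1 = 4 ^ m.+1 * 4 ^ m); last by rewrite -expnD; congr (_ ^ _); lia.
  apply: leq_mul; first by apply: IH; rewrite -(odd_double_half n) odd_n; lia.
  apply: leq_trans (bin_mid_leq m).
  by apply: dvdn_leq (prod_primes_dvd_bin m); rewrite bin_gt0; lia.
- have not_prime : ~~ prime m.*2.
    by apply/negP => /even_prime[|]; [lia | rewrite odd_double].
  rewrite add0n (primorial_split m.*2.-1 m.*2) ?leq_pred // prednK; last lia.
  rewrite big_ltn_cond // (negbTE not_prime) big_geq // muln1.
  apply: leq_trans (IH _ _) (leq_pexp2l _ (leq_pred _)) => //.
  by rewrite -(odd_double_half n) (negbTE odd_n); lia.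
Qed.

(** * The sequence of primes *)

Lemma next_prime_gt p : p < next_prime p.
Proof. exact: leq_addr. Qed.

Lemma prime_next_prime p : 0 < p -> prime (next_prime p).
Proof.
move=> p_gt0; set q := pdiv p`!.+1.
have pr_q : prime q by apply: pdiv_prime; rewrite ltnS fact_gt0.
have lt_pq : p < q.
  rewrite ltnNge; apply/negP => le_qp.
  have q_dvd_fact : q %| p`! by apply: dvdn_fact; rewrite prime_gt0.
  by have := pdiv_dvd p`!.+1; rewrite -/q -addn1 (dvdn_addr _ q_dvd_fact) Euclid_dvd1.
have has_prime : has prime (iota p.+1 p`!).
  apply/hasP; exists q => //; rewrite mem_iota.
  by have := pdiv_leq (ltn0Sn p`!); rewrite -/q; lia.
have := nth_find 0 has_prime; rewrite nth_iota //.
by move: has_prime; rewrite has_find size_iota.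
Qed.

Lemma nth_prime_gt0 j : 0 < nth_prime j.
Proof. by case: j => //= j; apply: leq_ltn_trans (next_prime_gt _). Qed.

Lemma prime_nth_prime j : 0 < j -> prime (nth_prime j).
Proof. by case: j => //= j _; apply/prime_next_prime/nth_prime_gt0. Qed.

Lemma nth_prime_mono : {homo nth_prime : i j / i <= j}.
Proof. by apply: homo_leq => [//|? ? ?|i]; [apply: leq_trans | apply/ltnW/next_prime_gt]. Qed.

Lemma nth_prime_succ j p k : nth_prime j = p -> k <= p -> has prime (iota p.+1 k) ->
  nth_prime j.+1 = p.+1 + find prime (iota p.+1 k).
Proof.
move=> /= -> le_kp has_k; rewrite /next_prime.
by rewrite -(subnKC (leq_trans le_kp (fact_geq p))) iotaD find_cat has_k.
Qed.

Lemma nth_prime_small j : j < 12 ->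
  nth_prime j.+1 = nth 0 [:: 2; 3; 5; 7; 11; 13; 17; 19; 23; 29; 31; 37] j.
Proof.
have p1 : nth_prime 1 = 2 by [].
have p2 : nth_prime 2 = 3 by rewrite (nth_prime_succ 1 2 1 p1).
have p3 : nth_prime 3 = 5 by rewrite (nth_prime_succ 2 3 2 p2).
have p4 : nth_prime 4 = 7 by rewrite (nth_prime_succ 3 5 2 p3).
have p5 : nth_prime 5 = 11 by rewrite (nth_prime_succ 4 7 4 p4).
have p6 : nth_prime 6 = 13 by rewrite (nth_prime_succ 5 11 2 p5).
have p7 : nth_prime 7 = 17 by rewrite (nth_prime_succ 6 13 4 p6).
have p8 : nth_prime 8 = 19 by rewrite (nth_prime_succ 7 17 2 p7).
have p9 : nth_prime 9 = 23 by rewrite (nth_prime_succ 8 19 4 p8).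
have p10 : nth_prime 10 = 29 by rewrite (nth_prime_succ 9 23 6 p9).
have p11 : nth_prime 11 = 31 by rewrite (nth_prime_succ 10 29 2 p10).
have p12 : nth_prime 12 = 37 by rewrite (nth_prime_succ 11 31 6 p11).
by case: j => [|[|[|[|[|[|[|[|[|[|[|[|j]]]]]]]]]]]].
Qed.

Definition prod_first_primes (n : nat) : nat := \prod_(1 <= i < n.+1) nth_prime i.

Lemma prod_first_primes_dvd_primorial j :
  prod_first_primes j %| primorial (nth_prime j).
Proof.
elim: j => [|j IH]; first by rewrite /prod_first_primes big_geq.
have lt_j : nth_prime j < nth_prime j.+1 by apply: next_prime_gt.
have pr_j : prime (nth_prime j.+1) by apply: prime_nth_prime.
rewrite /prod_first_primes big_nat_recr // -/(prod_first_primes j).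
rewrite (primorial_split (nth_prime j) (nth_prime j.+1)) ?(ltnW lt_j) //.
set q := nth_prime j.+1 in pr_j lt_j *.
rewrite big_mkcond big_nat_recr //= pr_j.
by rewrite dvdn_mul // dvdn_mull.
Qed.

Lemma prod_first_primes_leq j : prod_first_primes j <= 4 ^ nth_prime j.
Proof.
apply: leq_trans (primorial_leq _).
apply: dvdn_leq (prod_first_primes_dvd_primorial j).
by rewrite prodn_cond_gt0 // => p /prime_gt0.
Qed.

Lemma prod_first_primes_split n : 4 <= n ->
  prod_first_primes n = 210 * \prod_(5 <= i < n.+1) nth_prime i.
Proof.
move=> le4n; rewrite /prod_first_primes (big_cat_nat _ (n := 5)) // ?ltnS //.
by rewrite 4?big_ltn // big_geq // !nth_prime_small.
Qed.

Lemma prod_from5_geq n : 11 ^ (n - 4) <= \prod_(5 <= i < n.+1) nth_prime i.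
Proof.
rewrite -[n - 4]/(n.+1 - 5) -prod_nat_const_nat big_nat_cond [X in _ <= X]big_nat_cond.
apply: leq_prod => i /andP[/andP[le5i _] _].
by rewrite -[11](nth_prime_small 4) //; apply: nth_prime_mono.
Qed.

(** * Numerical bounds on logarithms *)

Open Scope R_scope.

Lemma le_of_deriv_nonneg (h dh : R -> R) v : 0 <= v ->
  (forall c, 0 <= c <= v -> is_derive h c (dh c)) ->
  (forall c, 0 <= c <= v -> 0 <= dh c) -> h 0 <= h v.
Proof.
move=> v_ge0 h_der dh_ge0; have [->|v_neq0] := Req_dec v 0; first lra.
have [c [c_ge0 [c_le ->]]] : exists c, 0 <= c /\ c <= v /\ h v = h 0 + dh c * (v - 0).
  by apply: MVT_cor3 => [|c c_ge0 c_le]; [lra | apply/is_derive_Reals/h_der].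
have := dh_ge0 c (conj c_ge0 c_le); nra.
Qed.

Lemma ln_ratio_lb v : 0 <= v < 1 ->
  2 * (v + v ^ 3 / 3 + v ^ 5 / 5) <= ln (1 + v) - ln (1 - v).
Proof.
move=> [v_ge0 v_lt1].
pose h x := ln (1 + x) - ln (1 - x) - 2 * (x + x ^ 3 / 3 + x ^ 5 / 5).
suff : h 0 <= h v by rewrite /h /= Rplus_0_r Rminus_0_r ln_1; lra.
apply: (le_of_deriv_nonneg h (fun c => 2 * c ^ 6 / (1 - c ^ 2))) => // c [c_ge0 c_le].
- by rewrite /h; auto_derive; [lra | field; split; nra].
- by apply: Rmult_le_pos; [have := pow_le c 6 c_ge0; lra | apply/Rlt_le/Rinv_0_lt_compat; nra].
Qed.

Lemma ln_ratio_ub v : 0 <= v <= 1 / 2 ->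
  ln (1 + v) - ln (1 - v) <= 2 * (v + v ^ 3 / 3 + v ^ 5 / 5 + 4 * v ^ 7 / 21).
Proof.
move=> [v_ge0 v_le].
pose h x := 2 * (x + x ^ 3 / 3 + x ^ 5 / 5 + 4 * x ^ 7 / 21) - (ln (1 + x) - ln (1 - x)).
suff : h 0 <= h v by rewrite /h /= Rplus_0_r Rminus_0_r ln_1; lra.
apply: (le_of_deriv_nonneg h (fun c => 2 * c ^ 6 * (4 / 3 - 1 / (1 - c ^ 2)))) => // c [c_ge0 c_le].
- by rewrite /h; auto_derive; [lra | field; split; nra].
- apply: Rmult_le_pos; first by have := pow_le c 6 c_ge0; lra.
  suff : 1 / (1 - c ^ 2) <= 4 / 3 by lra.
  apply: (Rmult_le_reg_r (1 - c ^ 2)); first nra.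
  field_simplify; nra.
Qed.

Definition ln_lower (r : R) : R :=
  let v := (r - 1) / (r + 1) in 2 * (v + v ^ 3 / 3 + v ^ 5 / 5).

Definition ln_upper (r : R) : R :=
  let v := (r - 1) / (r + 1) in 2 * (v + v ^ 3 / 3 + v ^ 5 / 5 + 4 * v ^ 7 / 21).

Lemma ln_lower_le r : 1 <= r -> ln_lower r <= ln r.
Proof.
move=> r_ge1; rewrite /ln_lower; set v := (r - 1) / (r + 1).
have v_ge0 : 0 <= v by apply: Rmult_le_pos; [lra | apply/Rlt_le/Rinv_0_lt_compat; lra].
have v_lt1 : v < 1 by apply: (Rmult_lt_reg_r (r + 1)); rewrite /v; [lra | field_simplify; lra].
have -> : ln r = ln (1 + v) - ln (1 - v).
  by rewrite -ln_div; [congr ln; rewrite /v; field; lra | lra | lra].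
exact: ln_ratio_lb.
Qed.

Lemma ln_le_upper r : 1 <= r <= 3 -> ln r <= ln_upper r.
Proof.
move=> [r_ge1 r_le3]; rewrite /ln_upper; set v := (r - 1) / (r + 1).
have v_ge0 : 0 <= v by apply: Rmult_le_pos; [lra | apply/Rlt_le/Rinv_0_lt_compat; lra].
have v_le : v <= 1 / 2 by apply: (Rmult_le_reg_r (r + 1)); rewrite /v; [lra | field_simplify; lra].
have -> : ln r = ln (1 + v) - ln (1 - v).
  by rewrite -ln_div; [congr ln; rewrite /v; field; lra | lra | lra].
exact: ln_ratio_ub.
Qed.

Lemma ln2_bounds : 0.6930 <= ln 2 <= 0.6932.
Proof.
have := ln_lower_le 2; have := ln_le_upper 2.
rewrite /ln_lower /ln_upper => /(_ ltac:(lra)) ub /(_ ltac:(lra)) lb; lra.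
Qed.

Lemma ln3_bounds : 1.0984 <= ln 3 <= 1.0987.
Proof.
rewrite (_ : 3 = 2 * (3 / 2)); last lra.
rewrite ln_mult; try lra.
have := ln2_bounds; have := ln_lower_le (3 / 2); have := ln_le_upper (3 / 2).
rewrite /ln_lower /ln_upper => /(_ ltac:(lra)) ub /(_ ltac:(lra)) lb; lra.
Qed.

Lemma ln12_bounds : 2.484 <= ln 12 <= 2.4851.
Proof.
have := ln2_bounds; have := ln3_bounds.
by rewrite (_ : 12 = 2 * 2 * 3) ?ln_mult; lra.
Qed.

Lemma ln11_bounds : 2.3974 <= ln 11 <= 2.3981.
Proof.
have -> : ln 11 = ln 2 + ln 2 + ln 2 + ln (11 / 8).
  by rewrite -!ln_mult; try lra; congr ln; lra.
have := ln2_bounds; have := ln_lower_le (11 / 8); have := ln_le_upper (11 / 8).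
rewrite /ln_lower /ln_upper => /(_ ltac:(lra)) ub /(_ ltac:(lra)) lb; lra.
Qed.

Lemma ln210_le : ln 210 <= 5.6.
Proof.
have [_ l2_ub] := ln2_bounds.
apply: Rle_trans (_ : ln (2 ^ 8) <= _); first by apply: ln_le; [lra | simpl; lra].
by rewrite ln_pow; [rewrite INR_IZR_INZ /=; lra | lra].
Qed.

Lemma ln_le_tangent a b : 0 < a -> 0 < b -> ln a <= ln b + (a - b) / b.
Proof.
move=> a_gt0 b_gt0; have := exp_ineq1_le (ln (a / b)).
rewrite exp_ln ?ln_div //; last exact: Rdiv_lt_0_compat.
have -> : (a - b) / b = a / b - 1 by field; lra.
lra.
Qed.

Lemma lnln4_le : ln (ln 4) <= 0.33.
Proof.
have [l2_lb l2_ub] := ln2_bounds.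
have ln4 : ln 4 = 2 * ln 2 by rewrite (_ : 4 = 2 * 2) ?ln_mult; lra.
apply: Rle_trans (_ : ln 1.3864 <= _).
  by apply: ln_le; lra.
have := ln_le_upper 1.3864; rewrite /ln_upper => /(_ ltac:(lra)); lra.
Qed.

(** * The recursive lower bound *)

Lemma quadratic_le_mul L0 L k α β : 1 <= α -> L0 <= L ->
  0 <= (α - 1) * L0 ^ 2 + (α * k - β) * L0 - β * k ->
  0 <= 2 * (α - 1) * L0 + α * k - β ->
  L ^ 2 <= (L + k) * (α * L - β).
Proof.
move=> α_ge1 le_L0L q0 dq0.
have taylor : (L + k) * (α * L - β) - L ^ 2 =
  ((α - 1) * L0 ^ 2 + (α * k - β) * L0 - β * k)
  + (2 * (α - 1) * L0 + α * k - β) * (L - L0) + (α - 1) * (L - L0) ^ 2 by ring.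
have : 0 <= (2 * (α - 1) * L0 + α * k - β) * (L - L0) by apply: Rmult_le_pos; lra.
have : 0 <= (α - 1) * (L - L0) ^ 2 by apply: Rmult_le_pos; [lra | apply: pow2_ge_0].
lra.
Qed.

(* For [a <= x <= 1 / tb], the bounds [La <= ln x], [ln_lower La <= ln (ln x)] and
   [tb <= 1 / x <= 1 / a] reduce [step_ineq] to a quadratic inequality in [ln x]. *)
Lemma step_ineq_on a tb La x :
  12 <= a <= x -> 0 <= tb <= / x -> 1 <= La <= ln a ->
  let k := ln_lower La - 2 + 11 * tb in
  let α := 1.67 - / a in
  let β := 1 + / a in
  0 <= α * La - β -> 0 < La + k ->
  0 <= (α - 1) * La ^ 2 + (α * k - β) * La - β * k ->
  0 <= 2 * (α - 1) * La + α * k - β ->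
  ln x ^ 2 <= (ln x + ln (ln x) - 2 + 11 / x) * ((1.67 - / x) * ln x - (1 + / x)).
Proof.
move=> [a_ge12 le_ax] [tb_ge0 tb_le] [La_ge1 La_le] k α β A0 K0 q0 dq0.
have L_ge : La <= ln x by apply: Rle_trans La_le (ln_le _ _ _ le_ax); lra.
have M_ge : ln_lower La <= ln (ln x).
  by apply: Rle_trans (ln_lower_le _ La_ge1) (ln_le _ _ _ L_ge); lra.
have inv_a : / x <= / a <= / 12 by split; apply: Rinv_le_contravar; lra.
have K_ge : ln x + k <= ln x + ln (ln x) - 2 + 11 / x by rewrite /k /Rdiv; lra.
have A_ge : α * ln x - β <= (1.67 - / x) * ln x - (1 + / x) by rewrite /α /β; nra.
have α_ge1 : 1 <= α by rewrite /α; lra.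
have A0' : 0 <= α * ln x - β.
  by apply: Rle_trans A0 _; apply: Rplus_le_compat_r; apply: Rmult_le_compat_l; lra.
apply: Rle_trans (quadratic_le_mul La (ln x) k α β α_ge1 L_ge q0 dq0) _.
by apply: Rmult_le_compat; lra.
Qed.

(* With [K] the first factor, so that [theta_lb x = x * K] below, this is
   [ln x / K <= 1.67 - 1 / ln x - 1 / x - 1 / (x ln x)] multiplied out; the constant
   1.67 is [2 - 0.33], where [0.33 >= ln (ln 4)]. *)
Lemma step_ineq x : 12 <= x ->
  ln x ^ 2 <= (ln x + ln (ln x) - 2 + 11 / x) * ((1.67 - / x) * ln x - (1 + / x)).
Proof.
move=> x_ge12; have [l2_lb l2_ub] := ln2_bounds; have [l3_lb l3_ub] := ln3_bounds.
have inv_le b : x <= b -> / b <= / x by move=> le_xb; apply: Rinv_le_contravar; lra.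
have inv_ge0 : 0 <= / x by apply/Rlt_le/Rinv_0_lt_compat; lra.
have [?|?] := Rle_lt_dec x 13.5.
  apply: (step_ineq_on 12 (/ 13.5) 2.484); rewrite /ln_lower; try lra.
  - by split; [lra | apply: inv_le].
  - by have := ln12_bounds; lra.
have [?|?] := Rle_lt_dec x 16.
  apply: (step_ineq_on 13.5 (/ 16) 2.60); rewrite /ln_lower; try lra.
  - by split; [lra | apply: inv_le].
  - by rewrite (_ : 13.5 = 3 * 3 * 3 / 2) ?ln_div ?ln_mult; lra.
have [?|?] := Rle_lt_dec x 20.25.
  apply: (step_ineq_on 16 (/ 20.25) 2.772); rewrite /ln_lower; try lra.
  - by split; [lra | apply: inv_le].
  - by rewrite (_ : 16 = 2 * 2 * 2 * 2) ?ln_mult; lra.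
have [?|?] := Rle_lt_dec x 40.5.
  apply: (step_ineq_on 20.25 (/ 40.5) 3.006); rewrite /ln_lower; try lra.
  - by split; [lra | apply: inv_le].
  - by rewrite (_ : 20.25 = 3 * 3 * 3 * 3 / (2 * 2)) ?ln_div ?ln_mult; lra.
apply: (step_ineq_on 40.5 0 3.70); rewrite /ln_lower; try lra.
by rewrite (_ : 40.5 = 3 * 3 * 3 * 3 / 2) ?ln_div ?ln_mult; lra.
Qed.

Definition theta_lb (x : R) : R := x * (ln x + ln (ln x)) - 2 * x + 11.

Lemma ln_succ_le x : 0 < x -> ln (x + 1) <= ln x + / x.
Proof. by move=> x_gt0; have := ln_le_tangent (x + 1) x ltac:(lra) x_gt0; rewrite /Rdiv; lra. Qed.

Lemma ln_ln_succ_le x : 1 < x -> ln (ln (x + 1)) <= ln (ln x) + / x / ln x.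
Proof.
move=> x_gt1; have lnx_gt0 : 0 < ln x by rewrite -ln_1; apply: ln_increasing; lra.
have ln_succ_gt0 : 0 < ln (x + 1) by rewrite -ln_1; apply: ln_increasing; lra.
have := ln_le_tangent _ _ ln_succ_gt0 lnx_gt0.
suff : (ln (x + 1) - ln x) / ln x <= / x / ln x by lra.
apply: Rmult_le_compat_r; first exact/Rlt_le/Rinv_0_lt_compat.
by have := ln_succ_le x ltac:(lra); lra.
Qed.

Lemma theta_lb_succ x : 12 <= x ->
  0 < theta_lb x /\ theta_lb (x + 1) <= theta_lb x + ln (theta_lb x) - ln (ln 4).
Proof.
move=> x_ge12; have core := step_ineq x x_ge12.
have L_ge : 2.48 <= ln x.
  apply: Rle_trans (_ : ln 12 <= _); last by apply: ln_le; lra.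
  by have := ln12_bounds; lra.
have M_ge : 0.9 <= ln (ln x).
  apply: Rle_trans (_ : ln 2.48 <= _); last by apply: ln_le; lra.
  by have := ln_lower_le 2.48; rewrite /ln_lower; lra.
set L := ln x in core L_ge M_ge *; set M := ln L in core M_ge *.
set K := L + M - 2 + 11 / x in core.
have t_gt0 : 0 < / x by apply: Rinv_0_lt_compat; lra.
have K_gt0 : 0 < K by rewrite /K /Rdiv; nra.
have F_eq : theta_lb x = x * K by rewrite /theta_lb /K -/L -/M; field; lra.
have F_gt0 : 0 < theta_lb x by rewrite F_eq; apply: Rmult_lt_0_compat; lra.
split=> //.
have L1 : ln (x + 1) <= L + / x by apply: ln_succ_le; lra.
have M1 : ln (ln (x + 1)) <= M + / x / L by apply: ln_ln_succ_le; lra.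
have lnK : M + 1 - L / K <= ln K.
  have := ln_le_tangent L K ltac:(lra) K_gt0.
  by rewrite -/M (_ : (L - K) / K = L / K - 1); [lra | field; lra].
have ratio : L / K <= 1.67 - / L - / x - / x / L.
  apply: (Rmult_le_reg_l (K * L)); first by apply: Rmult_lt_0_compat; lra.
  have -> : K * L * (L / K) = L ^ 2 by field; lra.
  have -> : K * L * (1.67 - / L - / x - / x / L) = K * ((1.67 - / x) * L - (1 + / x)).
    by field; lra.
  exact: core.
have succ : theta_lb (x + 1) <= (x + 1) * (L + / x + M + / x / L) - 2 * (x + 1) + 11.
  rewrite /theta_lb; apply: Rplus_le_compat_r; apply: Rplus_le_compat_r.
  by apply: Rmult_le_compat_l; lra.
have succ_eq : (x + 1) * (L + / x + M + / x / L) = x * (L + M) + 1 + / L + L + / x + M + / x / L.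
  by field; lra.
have F_eq' : x * K = x * (L + M) - 2 * x + 11 by rewrite /K; field; lra.
have := lnln4_le.
rewrite F_eq ln_mult -/L; lra.
Qed.

(** * The product of the first primes *)

Lemma INR_muln m n : INR (m * n) = INR m * INR n.
Proof. exact: mult_INR. Qed.

Lemma INR_expn m n : INR (m ^ n) = INR m ^ n.
Proof. by elim: n => // n IH; rewrite expnS INR_muln IH. Qed.

Lemma INR_gt0 k : (0 < k)%N -> 0 < INR k.
Proof. by move=> /ltP; apply: lt_0_INR. Qed.

Lemma IZR_of_nat_le_INR k n : (k <= n)%N -> IZR (Z.of_nat k) <= INR n.
Proof. by rewrite -INR_IZR_INZ => /leP; apply: le_INR. Qed.

Lemma INR_le_IZR_of_nat n k : (n <= k)%N -> INR n <= IZR (Z.of_nat k).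
Proof. by rewrite -INR_IZR_INZ => /leP; apply: le_INR. Qed.

Definition theta (n : nat) : R := ln (INR (prod_first_primes n)).

Lemma prod_first_primes_gt0 n : (0 < prod_first_primes n)%N.
Proof. by rewrite prodn_gt0 // => i; apply: nth_prime_gt0. Qed.

Lemma theta_succ n : theta n.+1 = theta n + ln (INR (nth_prime n.+1)).
Proof.
rewrite /theta /prod_first_primes big_nat_recr // INR_muln ln_mult //.
  exact/INR_gt0/prod_first_primes_gt0.
exact/INR_gt0/nth_prime_gt0.
Qed.

Lemma theta_le n : theta n <= INR (nth_prime n) * ln 4.
Proof.
rewrite /theta -ln_pow; last lra.
apply: ln_le; first exact/INR_gt0/prod_first_primes_gt0.
have -> : 4 = INR 4 by rewrite INR_IZR_INZ.
by rewrite -INR_expn; apply/le_INR/leP/prod_first_primes_leq.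
Qed.

Lemma theta_12_ge : 29 <= theta 12.
Proof.
rewrite /theta /prod_first_primes 12?big_ltn // big_geq // !nth_prime_small //.
rewrite !INR_muln !INR_IZR_INZ /=.
apply: Rle_trans (_ : ln (2 ^ 42) <= _).
  by rewrite ln_pow; [have := ln2_bounds; rewrite INR_IZR_INZ /=; lra | lra].
by apply: ln_le; [apply: pow_lt | simpl]; lra.
Qed.

Lemma theta_lb_12_le : theta_lb 12 <= 29.
Proof.
have ln12 := ln12_bounds.
have lnln12 : ln (ln 12) <= ln 2.4851 by apply: ln_le; lra.
have := ln_le_upper 2.4851; rewrite /ln_upper /theta_lb => /(_ ltac:(lra)); lra.
Qed.

Lemma theta_lb_le_theta n : (12 <= n)%N -> theta_lb (INR n) <= theta n.
Proof.
elim: n => // n IH; rewrite leq_eqVlt => /predU1P[<-|lt_11n].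
  by rewrite INR_IZR_INZ; apply: Rle_trans theta_lb_12_le theta_12_ge.
have [F_gt0 F_succ] := theta_lb_succ (INR n) (IZR_of_nat_le_INR 12 n lt_11n).
have {}IH := IH lt_11n.
set p := INR (nth_prime n.+1).
have p_ge1 : 1 <= p by apply: (IZR_of_nat_le_INR 1); apply: nth_prime_gt0.
have lnp_ge0 : 0 <= ln p by rewrite -ln_1; apply: ln_le; lra.
have cheb : theta n + ln p <= p * ln 4 by rewrite -theta_succ; apply: theta_le.
have ln4_gt0 : 0 < ln 4 by rewrite -ln_1; apply: ln_increasing; lra.
have lnF : ln (theta_lb (INR n)) - ln (ln 4) <= ln p.
  rewrite -ln_div //; apply: ln_le; first exact: Rdiv_lt_0_compat.
  by apply: (Rmult_le_reg_r (ln 4)) => //; rewrite /Rdiv Rmult_assoc Rinv_l; lra.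
by rewrite S_INR theta_succ -/p; lra.
Qed.

Definition ln_rhs (x : R) : R := x * (ln x + ln (ln x)) - 2 * x - 2.

Lemma P11E n : P11 n = INR (\prod_(5 <= i < n.+1) nth_prime i).
Proof. by symmetry; apply: (big_morph INR INR_muln). Qed.

Lemma P11_gt0 n : 0 < P11 n.
Proof. by rewrite P11E; apply: INR_gt0; rewrite prodn_gt0 // => i; apply: nth_prime_gt0. Qed.

Lemma theta_split n : (4 <= n)%N -> theta n = ln 210 + ln (P11 n).
Proof.
move=> le4n; rewrite /theta prod_first_primes_split // INR_muln -P11E ln_mult.
- by rewrite INR_IZR_INZ.
- exact: INR_gt0.
- exact: P11_gt0.
Qed.

Lemma ln_P11_ge n : INR (n - 4) * ln 11 <= ln (P11 n).
Proof.
rewrite P11E -ln_pow; last lra.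
apply: ln_le; first by apply: pow_lt; lra.
have -> : 11 = INR 11 by rewrite INR_IZR_INZ.
by rewrite -INR_expn; apply/le_INR/leP/prod_from5_geq.
Qed.

Lemma ln_rhs_le x U : ln x <= U -> 1 < x -> 1 <= U <= 3 ->
  ln_rhs x <= (U + ln_upper U - 2) * x - 2.
Proof.
move=> lnx_le x_gt1 U_bounds.
have lnx_gt0 : 0 < ln x by rewrite -ln_1; apply: ln_increasing; lra.
have lnlnx_le : ln (ln x) <= ln_upper U.
  exact: Rle_trans (ln_le _ _ lnx_gt0 lnx_le) (ln_le_upper _ U_bounds).
suff : x * (ln x + ln (ln x)) <= x * (U + ln_upper U) by rewrite /ln_rhs; lra.
by apply: Rmult_le_compat_l; lra.
Qed.

Lemma ln_P11_gt_small n : (2 <= n <= 11)%N -> ln_rhs (INR n) < ln (P11 n).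
Proof.
move=> /andP[le2n len11].
have [l2_lb l2_ub] := ln2_bounds; have [l3_lb l3_ub] := ln3_bounds.
have x_ge2 : 2 <= INR n := IZR_of_nat_le_INR 2 n le2n.
have sub_ge : INR n - 4 <= INR (n - 4).
  have /leP/le_INR : (n <= n - 4 + 4)%N by lia.
  by rewrite -plusE plus_INR INR_IZR_INZ /=; lra.
have sub_ge0 := pos_INR (n - 4).
have P11_ge : 2.3974 * INR (n - 4) <= ln (P11 n).
  apply: Rle_trans (ln_P11_ge n); rewrite Rmult_comm.
  by apply: Rmult_le_compat_l => //; have := ln11_bounds; lra.
have [le_n6|lt_6n] := leqP n 6.
- have x_le6 : INR n <= 6 := INR_le_IZR_of_nat n 6 le_n6.
  have : ln (INR n) <= 1.7919.
    apply: Rle_trans (_ : ln 6 <= _); first by apply: ln_le; lra.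
    by rewrite (_ : 6 = 2 * 3) ?ln_mult; lra.
  by move=> /ln_rhs_le /(_ ltac:(lra) ltac:(lra)); rewrite /ln_upper; lra.
- have x_ge7 : 7 <= INR n := IZR_of_nat_le_INR 7 n lt_6n.
  have x_le11 : INR n <= 11 := INR_le_IZR_of_nat n 11 len11.
  have : ln (INR n) <= 2.3981.
    apply: Rle_trans (_ : ln 11 <= _); first by apply: ln_le; lra.
    by have := ln11_bounds; lra.
  by move=> /ln_rhs_le /(_ ltac:(lra) ltac:(lra)); rewrite /ln_upper; lra.
Qed.

Lemma ln_P11_gt n : (2 <= n)%N -> ln_rhs (INR n) < ln (P11 n).
Proof.
move=> le2n; have [len11|lt11n] := leqP n 11.
  by apply: ln_P11_gt_small; rewrite le2n.
have := theta_lb_le_theta n lt11n; rewrite theta_split; last lia.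
by have := ln210_le; rewrite /theta_lb /ln_rhs; lra.
Qed.

Theorem lemma2p11 (n : nat) (hn : (2 <= n)%nat) :
  P11 n > Rpower (INR n * ln (INR n)) (INR n) * exp (- 2 * INR n - 2).
Proof.
have x_gt1 : 1 < INR n by apply: (lt_INR 1); apply/ltP.
have lnx_gt0 : 0 < ln (INR n) by rewrite -ln_1; apply: ln_increasing; lra.
rewrite /Rpower -exp_plus -(exp_ln _ (P11_gt0 n)).
apply: exp_increasing; rewrite ln_mult; try lra.
by have := ln_P11_gt n hn; rewrite /ln_rhs; lra.
Qed.
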